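(* For every $\mathbb T$-category $X$, the subset $\hat X$ is L-closed in the $\mathbb T$-category $|X|\multimap\mathsf V$, i.e. $\hat X$ equals its L-closure in $|X|\multimap\mathsf V$.
   Context: Let $\mathsf V=(\mathsf V,\otimes,k)$ be a commutative unital quantale (complete lattice, commutative associative $\otimes$ with neutral $k$, $u\otimes(-)$ preserving suprema), internal hom $z\le u\multimap v\iff z\otimes u\le v$. A $\mathsf V$-relation $r$ from $X$ to $Y$ is a map $X\times Y\to\mathsf V$; composition $(s\cdot r)(x,z)=\bigvee_y r(x,y)\otimes s(y,z)$, converse $r^\circ(y,x)=r(x,y)$; a map $f$ is the relation $f(x,y)=k$ if $f(x)=y$, $\bot$ otherwise. Let $\mathbb T=(T,e,m)$ be a Set-monad with $T1=1$, $T$ sending pullbacks to weak pullbacks and each naturality square of $m$ a weak pullback, and $\xi:T\mathsf V\to\mathsf V$ with $\xi e_{\mathsf V}=1$, $\xi\cdot T\xi=\xi\cdot m_{\mathsf V}$, $\xi\cdot T(\otimes)=\otimes\cdot\langle\xi T\pi_1,\xi T\pi_2\rangle$, $\xi\cdot Tk=k$, and such that $\varphi\mapsto\xi\cdot T\varphi$, $\mathsf V^X\to\mathsf V^{TX}$, is natural w.r.t. the monotone maps $P_{\mathsf V}f(\varphi)(y)=\bigvee_{f(x)=y}\varphi(x)$ (a strict topological theory). For a relation $r$ from $X$ to $Y$ let $T_\xi r(\mathfrak x,\mathfrak y)=\bigvee\{\xi(Tr(\mathfrak w))\mid\mathfrak w\in T(X\times Y),T\pi_1\mathfrak w=\mathfrak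 x,T\pi_2\mathfrak w=\mathfrak y\}$. A $\mathbb T$-category $(X,a)$ is a set with $a:TX\times X\to\mathsf V$ such that $k\le a(e_X(x),x)$ and $T_\xi a(\mathfrak X,\mathfrak x)\otimes a(\mathfrak x,x)\le a(m_X(\mathfrak X),x)$; a $\mathbb T$-functor $f:(X,a)\to(Y,b)$ satisfies $a(\mathfrak x,x)\le b(Tf(\mathfrak x),f(x))$. For points of $(Y,b)$, $u\cong v$ means $k\le b(e_Y(u),v)$ and $k\le b(e_Y(v),u)$. The L-closure of $M\subseteq X$ is $\overline M=\{x\mid$ for all $\mathbb T$-functors $f,g:X\to Y$ with $f|_M=g|_M$, $f(x)\cong g(x)\}$; $M$ is L-closed if $\overline M=M$. $\mathsf V$ is a $\mathbb T$-category with $\hom_\xi(\mathfrak v,v)=\xi(\mathfrak v)\multimap v$; $|X|=(TX,m_X)$ with $m_X$ viewed as a relation; $|X|\multimap\mathsf V$ is the set of $\mathbb T$-functors $|X|\to\mathsf V$ with structure $[m_X,\hom_\xi](\mathfrak p,h)=\bigwedge\{\xi(T\mathrm{ev}(\mathfrak q))\multimap h(m_X(T\pi_1\mathfrak q))\mid\mathfrak q\in T(TX\times(|X|\multimap\mathsf V)),T\pi_2\mathfrak q=\mathfrak p\}$, where $\mathrm{ev}(\mathfrak x,\varphi)=\varphi(\mathfrak x)$. With $r(\mathfrak x,\mathfrak y)=\bigvee_{m_X(\mathfrak X)=\mathfrak x}T_\xi a(\mathfrak X,\mathfrak y)$, the dual is $X^{\mathrm{op}}=(TX,c)$ with $c(\mathfrak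 X,\mathfrak y)=T_\xi(r^\circ)(\mathfrak X,e_{TX}(\mathfrak y))$. $\hat X$ is the set of those $\psi\in|X|\multimap\mathsf V$ which are also $\mathbb T$-functors $X^{\mathrm{op}}\to\mathsf V$. *)

Set Implicit Arguments.
Unset Strict Implicit.

Record Quantale := {
  qcar :> Type;
  qle : qcar -> qcar -> Prop;
  qsup : (qcar -> Prop) -> qcar;
  qle_refl : forall x, qle x x;
  qle_trans : forall x y z, qle x y -> qle y z -> qle x z;
  qle_antisym : forall x y, qle x y -> qle y x -> x = y;
  qsup_ub : forall (S : qcar -> Prop) x, S x -> qle x (qsup S);
  qsup_least : forall (S : qcar -> Prop) y,
      (forall x, S x -> qle x y) -> qle (qsup S) y;
  qtens : qcar -> qcar -> qcar;
  qk : qcar;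
  qtens_comm : forall u v, qtens u v = qtens v u;
  qtens_assoc : forall u v w, qtens u (qtens v w) = qtens (qtens u v) w;
  qtens_k : forall u, qtens qk u = u;
  qtens_sup : forall u (S : qcar -> Prop),
      qtens u (qsup S) = qsup (fun w => exists v, S v /\ w = qtens u v)
}.

Arguments qle : clear implicits.
Arguments qsup : clear implicits.
Arguments qtens : clear implicits.
Arguments qk : clear implicits.

Definition qbot (V : Quantale) : V := qsup V (fun _ => False).
Definition qinf (V : Quantale) (S : V -> Prop) : V :=
  qsup V (fun y => forall x, S x -> qle V y x).
Definition qhom (V : Quantale) (u v : V) : V :=
  qsup V (fun z => qle V (qtens V z u) v).

Arguments qbot : clear implicits.
Arguments qinf : clear implicits.
Arguments qhom : clear implicits.

Record SetMonad := {
  T :> Type -> Type;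
  fmap : forall A B, (A -> B) -> T A -> T B;
  fmap_id : forall A (x : T A), fmap (fun a => a) x = x;
  fmap_comp : forall A B C (f : A -> B) (g : B -> C) (x : T A),
      fmap g (fmap f x) = fmap (fun a => g (f a)) x;
  eta : forall A, A -> T A;
  mu : forall A, T (T A) -> T A;
  eta_nat : forall A B (f : A -> B) a, fmap f (eta a) = eta (f a);
  mu_nat : forall A B (f : A -> B) (X : T (T A)),
      fmap f (mu X) = mu (fmap (fmap f) X);
  mu_eta_l : forall A (x : T A), mu (eta x) = x;
  mu_eta_r : forall A (x : T A), mu (fmap (@eta A) x) = x;
  mu_assoc : forall A (X : T (T (T A))), mu (mu X) = mu (fmap (@mu A) X)
}.

Arguments fmap {s A B} f x.
Arguments eta {s A} a.
Arguments mu {s A} X.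

Definition T_one (M : SetMonad) : Prop :=
  forall u v : M unit, u = v.

(* T sends pullbacks to weak pullbacks (canonical pullback as a sigma type) *)
Definition T_weak_pullbacks (M : SetMonad) : Prop :=
  forall A B C (f : A -> C) (g : B -> C) (x : M A) (y : M B),
    fmap f x = fmap g y ->
    exists w : M {p : (A * B)%type | f (fst p) = g (snd p)},
      fmap (fun p => fst (proj1_sig p)) w = x /\
      fmap (fun p => snd (proj1_sig p)) w = y.

(* every naturality square of m is a weak pullback *)
Definition mu_nat_weak_pullback (M : SetMonad) : Prop :=
  forall A B (f : A -> B) (X : M (M B)) (x : M A),
    mu X = fmap f x ->
    exists W : M (M A), fmap (fmap f) W = X /\ mu W = x.

Definition Vrel (V : Quantale) (X Y : Type) := X -> Y -> V.

Definition Vconv (V : Quantale) X Y (r : Vrel V X Y) : Vrel V Y X :=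
  fun y x => r x y.

Definition map_rel (V : Quantale) X Y (f : X -> Y) : Vrel V X Y :=
  fun x y => qsup V (fun v => f x = y /\ v = qk V).
(* i.e. k if f x = y, bottom otherwise *)

Definition PV (V : Quantale) X Y (f : X -> Y) (phi : X -> V) : Y -> V :=
  fun y => qsup V (fun v => exists x, f x = y /\ v = phi x).

Record StrictTopTheory (V : Quantale) (M : SetMonad) := {
  xi : M V -> V;
  xi_eta : forall v : V, xi (eta v) = v;
  xi_mu : forall X : M (M V), xi (fmap xi X) = xi (mu X);
  xi_tens : forall w : M (V * V)%type,
      xi (fmap (fun p => qtens V (fst p) (snd p)) w)
      = qtens V (xi (fmap fst w)) (xi (fmap snd w));
  xi_k : forall u : M unit, xi (fmap (fun _ => qk V) u) = qk V;
  xi_nat : forall X Y (f : X -> Y) (phi : X -> V) (y : M Y),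
      xi (fmap (PV f phi) y) = PV (fmap f) (fun x => xi (fmap phi x)) y
}.

Arguments xi {V M} s _.

Section Theory.
Variables (V : Quantale) (M : SetMonad) (th : StrictTopTheory V M).

Definition Txi X Y (r : Vrel V X Y) : Vrel V (M X) (M Y) :=
  fun x y => qsup V (fun v => exists w : M (X * Y)%type,
      fmap fst w = x /\ fmap snd w = y /\
      v = xi th (fmap (fun p => r (fst p) (snd p)) w)).

Definition isTcat X (a : Vrel V (M X) X) : Prop :=
  (forall x : X, qle V (qk V) (a (eta x) x)) /\
  (forall (XX : M (M X)) (x1 : M X) (x : X),
      qle V (qtens V (Txi a XX x1) (a x1 x)) (a (mu XX) x)).

Definition isTfunctor X Y (a : Vrel V (M X) X) (b : Vrel V (M Y) Y)
  (f : X -> Y) : Prop :=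
  forall (x1 : M X) (x : X), qle V (a x1 x) (b (fmap f x1) (f x)).

Definition Tiso Y (b : Vrel V (M Y) Y) (u v : Y) : Prop :=
  qle V (qk V) (b (eta u) v) /\ qle V (qk V) (b (eta v) u).

Definition Lclosure Z (c : Vrel V (M Z) Z) (Msub : Z -> Prop) (z : Z) : Prop :=
  forall (Y : Type) (b : Vrel V (M Y) Y), isTcat b ->
  forall f g : Z -> Y, isTfunctor c b f -> isTfunctor c b g ->
    (forall m, Msub m -> f m = g m) -> Tiso b (f z) (g z).

Definition LclosedIn Z (c : Vrel V (M Z) Z) (Msub : Z -> Prop) : Prop :=
  forall z, Lclosure c Msub z <-> Msub z.

Definition hom_xi : Vrel V (M V) V := fun v1 v => qhom V (xi th v1) v.

Definition absX X : Vrel V (M (M X)) (M X) := map_rel V (@mu M X).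

Definition LinV X := {h : M X -> V | isTfunctor (@absX X) hom_xi h}.

Definition LinV_struct X : Vrel V (M (LinV X)) (LinV X) :=
  fun p h => qinf V (fun v => exists q : M (M X * LinV X)%type,
      fmap snd q = p /\
      v = qhom V (xi th (fmap (fun s => proj1_sig (snd s) (fst s)) q))
                 (proj1_sig h (mu (fmap fst q)))).

Definition dual_r X (a : Vrel V (M X) X) : Vrel V (M X) (M X) :=
  fun x1 y1 => qsup V (fun v => exists XX : M (M X), mu XX = x1 /\
                                   v = Txi a XX y1).

Definition dual_struct X (a : Vrel V (M X) X) : Vrel V (M (M X)) (M X) :=
  fun XX y1 => Txi (Vconv (dual_r a)) XX (eta y1).

Definition Xhat X (a : Vrel V (M X) X) (psi : LinV X) : Prop :=
  isTfunctor (dual_struct a) hom_xi (proj1_sig psi).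

End Theory.

Arguments LinV [V M] th X.
Arguments LinV_struct [V M] th X _ _.
Arguments Xhat [V M] th [X] a psi.
Arguments hom_xi [V M] th _ _.
Arguments dual_struct [V M] th [X] a _ _.
Arguments Txi [V M] th [X Y] r _ _.

(* A presheaf [psi] on [|X|] lies in [X-hat] exactly when it satisfies the
   pointwise inequalities [r(y, x) (x) psi x <= psi y] for the relation [r]
   underlying [X^op].  For fixed [x] and [y] both sides are T-functors
   [|X| -o V --> V] of [psi] (evaluations, tensored with a constant or
   combined by a binary meet), so [psi |-> r(y, x) (x) psi x] and
   [psi |-> (r(y, x) (x) psi x) /\ psi y] agree on [X-hat].  If [psi] is in
   the L-closure they agree up to [~=] at [psi], which in [V] is equality,
   and that equality is the required inequality. *)
From Stdlib Require Import Setoid FunctionalExtensionality.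

Section QuantaleFacts.
Variable V : Quantale.

Lemma qsup_pair_le (x y : V) : qle V x y -> qsup V (fun v => v = x \/ v = y) = y.
Proof.
  intro Hxy. apply qle_antisym.
  - apply qsup_least. intros z [-> | ->]; [exact Hxy | apply qle_refl].
  - apply qsup_ub. now right.
Qed.

Lemma qtens_monor (u x y : V) : qle V x y -> qle V (qtens V u x) (qtens V u y).
Proof.
  intro Hxy. rewrite <- (qsup_pair_le _ _ Hxy), qtens_sup.
  apply qsup_ub. exists x. split; auto.
Qed.

Lemma qtens_monol (u x y : V) : qle V x y -> qle V (qtens V x u) (qtens V y u).
Proof.
  intro Hxy. rewrite (qtens_comm x u), (qtens_comm y u). now apply qtens_monor.
Qed.

Lemma qtens_supl (S : V -> Prop) (u v : V) :
  (forall s, S s -> qle V (qtens V s u) v) -> qle V (qtens V (qsup V S) u) v.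
Proof.
  intro HS. rewrite qtens_comm, qtens_sup. apply qsup_least.
  intros w [s [Hs ->]]. rewrite qtens_comm. auto.
Qed.

Lemma qle_hom (z u v : V) : qle V z (qhom V u v) <-> qle V (qtens V z u) v.
Proof.
  split; intro H.
  - eapply qle_trans; [apply qtens_monol, H |].
    apply qtens_supl. auto.
  - apply qsup_ub. exact H.
Qed.

Lemma qinf_lb (S : V -> Prop) x : S x -> qle V (qinf V S) x.
Proof. intro Hx. apply qsup_least. auto. Qed.

Lemma qinf_glb (S : V -> Prop) y : (forall x, S x -> qle V y x) -> qle V y (qinf V S).
Proof. intro H. apply qsup_ub. exact H. Qed.

End QuantaleFacts.

Section TopologicalTheoryFacts.
Variables (V : Quantale) (M : SetMonad) (th : StrictTopTheory V M).

(* [xi] is monotone: compare [g] with [PV fst] of the function on [A * bool]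
   that is [g] on [true] and [f] on [false], and use naturality of [xi]. *)
Lemma xi_mono A (f g : A -> V) (p : M A) : (forall a, qle V (f a) (g a)) ->
  qle V (xi th (fmap f p)) (xi th (fmap g p)).
Proof.
  intro Hfg.
  set (phi := fun x : A * bool => if snd x then g (fst x) else f (fst x)).
  assert (Hphi : PV (@fst A bool) phi = g).
  { extensionality z. apply qle_antisym.
    - apply qsup_least. intros v [[z' b] [Hz ->]]. simpl in Hz; subst z'.
      unfold phi; destruct b; simpl; [apply qle_refl | apply Hfg].
    - apply qsup_ub. exists (z, true). auto. }
  rewrite <- Hphi, xi_nat. apply qsup_ub.
  exists (fmap (fun z => (z, false)) p). rewrite !fmap_comp, fmap_id. auto.
Qed.

Lemma xi_tensE A (f g : A -> V) (p : M A) :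
  xi th (fmap (fun a => qtens V (f a) (g a)) p)
  = qtens V (xi th (fmap f p)) (xi th (fmap g p)).
Proof.
  pose proof (xi_tens th (fmap (fun a => (f a, g a)) p)) as E.
  rewrite !fmap_comp in E. exact E.
Qed.

Lemma hom_xi_Tcat : isTcat th (hom_xi th).
Proof.
  split.
  - intro v. apply qle_hom. rewrite xi_eta, qtens_k. apply qle_refl.
  - intros XX x1 v. unfold hom_xi at 2 3. apply qle_hom.
    assert (Hcomp : qle V (qtens V (Txi th (hom_xi th) XX x1) (xi th (mu XX)))
                          (xi th x1)).
    { apply qtens_supl. intros s [w [Hw1 [Hw2 ->]]].
      rewrite <- xi_mu, <- Hw1, <- Hw2. unfold hom_xi.
      rewrite fmap_comp, <- xi_tensE.
      apply xi_mono. intro q. apply qle_hom, qle_refl. }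
    rewrite <- qtens_assoc, (qtens_comm (qhom _ _ _)), qtens_assoc.
    eapply qle_trans; [apply qtens_monol, Hcomp |].
    rewrite qtens_comm. apply qle_hom, qle_refl.
Qed.

Lemma hom_xi_Tiso (u v : V) : Tiso (hom_xi th) u v -> u = v.
Proof.
  unfold Tiso, hom_xi. rewrite !xi_eta, !qle_hom, !qtens_k.
  intros [Huv Hvu]. now apply qle_antisym.
Qed.

Lemma Tfunctor_hom_xi_meet Z (c : Vrel V (M Z) Z) (F G : Z -> V) :
  isTfunctor c (hom_xi th) F -> isTfunctor c (hom_xi th) G ->
  isTfunctor c (hom_xi th) (fun z => qinf V (fun w => w = F z \/ w = G z)).
Proof.
  intros HF HG p z. apply qle_hom, qinf_glb.
  intros w [-> | ->].
  - eapply qle_trans; [apply (qtens_monor V _ _ (xi th (fmap F p))) |].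
    + apply xi_mono. intro q. apply qinf_lb. now left.
    + apply qle_hom, HF.
  - eapply qle_trans; [apply (qtens_monor V _ _ (xi th (fmap G p))) |].
    + apply xi_mono. intro q. apply qinf_lb. now right.
    + apply qle_hom, HG.
Qed.

Lemma Lclosure_hom_xi_eq Z (c : Vrel V (M Z) Z) (S : Z -> Prop) (F G : Z -> V)
  (z : Z) : Lclosure th c S z ->
  isTfunctor c (hom_xi th) F -> isTfunctor c (hom_xi th) G ->
  (forall s, S s -> F s = G s) -> F z = G z.
Proof.
  intros Hz HF HG HFG. apply hom_xi_Tiso, (Hz V _ hom_xi_Tcat); assumption.
Qed.

Lemma Lclosure_sub Z (c : Vrel V (M Z) Z) (S : Z -> Prop) (z : Z) :
  S z -> Lclosure th c S z.
Proof.
  intros Hz Y b Hb f g _ _ Hfg. rewrite (Hfg z Hz). split; apply (proj1 Hb).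
Qed.

Hypothesis HT1 : T_one M.

Lemma fmap_const A B (b : B) (p : M A) : fmap (fun _ => b) p = eta b.
Proof.
  rewrite <- (fmap_comp (fun _ => tt) (fun _ : unit => b)).
  rewrite (HT1 (fmap (fun _ => tt) p) (eta tt)). apply eta_nat.
Qed.

Lemma xi_const A (v : V) (p : M A) : xi th (fmap (fun _ => v) p) = v.
Proof. rewrite fmap_const. apply xi_eta. Qed.

Lemma Tfunctor_hom_xi_tensl Z (c : Vrel V (M Z) Z) (d : V) (F : Z -> V) :
  isTfunctor c (hom_xi th) F ->
  isTfunctor c (hom_xi th) (fun z => qtens V d (F z)).
Proof.
  intros HF p z. apply qle_hom.
  rewrite (xi_tensE _ (fun _ => d) F), xi_const.
  rewrite qtens_assoc, (qtens_comm _ d), <- qtens_assoc.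
  apply qtens_monor, qle_hom, HF.
Qed.

Variable X : Type.

Lemma LinV_ev_Tfunctor (x1 : M X) :
  isTfunctor (LinV_struct th X) (hom_xi th) (fun h : LinV th X => proj1_sig h x1).
Proof.
  intros p h. apply qinf_lb.
  exists (fmap (fun h => (x1, h)) p). rewrite !fmap_comp, fmap_id. simpl.
  rewrite fmap_const, mu_eta_l. auto.
Qed.

Variable a : Vrel V (M X) X.

Lemma Xhat_iff_dual_r (psi : LinV th X) : Xhat th a psi <->
  forall x1 y1 : M X,
    qle V (qtens V (dual_r th a y1 x1) (proj1_sig psi x1)) (proj1_sig psi y1).
Proof.
  split.
  - intros Hpsi x1 y1. specialize (Hpsi (eta x1) y1).
    unfold hom_xi in Hpsi. rewrite eta_nat, xi_eta, qle_hom in Hpsi.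
    eapply qle_trans; [| exact Hpsi]. apply qtens_monol.
    apply qsup_ub. exists (eta (x1, y1)). rewrite !eta_nat, xi_eta. auto.
  - intros Hpsi XX y1. apply qle_hom, qtens_supl.
    intros s [w [Hw1 [Hw2 ->]]]. rewrite <- Hw1, fmap_comp, <- xi_tensE.
    eapply qle_trans.
    + apply (xi_mono _ _ (fun q => proj1_sig psi (snd q))).
      intros [x1 y]. apply Hpsi.
    + rewrite <- (fmap_comp snd (proj1_sig psi)), Hw2, eta_nat, xi_eta.
      apply qle_refl.
Qed.

End TopologicalTheoryFacts.

Theorem mainTheorem19 (V : Quantale) (M : SetMonad) (th : StrictTopTheory V M)
  (HT1 : T_one M) (Hwp : T_weak_pullbacks M) (Hmu : mu_nat_weak_pullback M)
  (X : Type) (a : Vrel V (M X) X) (Ha : isTcat th a) :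
  LclosedIn th (LinV_struct th X) (Xhat th a).
Proof.
  intro psi. split; [| apply Lclosure_sub].
  intro Hpsi. apply Xhat_iff_dual_r. intros x1 y1.
  set (F := fun h : LinV th X => qtens V (dual_r th a y1 x1) (proj1_sig h x1)).
  set (G := fun h : LinV th X => qinf V (fun w => w = F h \/ w = proj1_sig h y1)).
  assert (HF : isTfunctor (LinV_struct th X) (hom_xi th) F).
  { apply Tfunctor_hom_xi_tensl, LinV_ev_Tfunctor; assumption. }
  assert (HFG : F psi = G psi).
  { eapply Lclosure_hom_xi_eq; [exact Hpsi | exact HF | |].
    - apply Tfunctor_hom_xi_meet; [exact HF | apply LinV_ev_Tfunctor, HT1].
    - intros h Hh. rewrite Xhat_iff_dual_r in Hh. apply qle_antisym.
      + apply qinf_glb. intros w [-> | ->];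
          [apply qle_refl | apply Hh].
      + apply qinf_lb. now left. }
  change (qle V (F psi) (proj1_sig psi y1)).
  rewrite HFG. apply qinf_lb. now right.
Qed.
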